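(* Let $\mathcal N$ be an associative algebra over a field of characteristic $\neq 2$, let $H\in\mathcal N$, and for $F\in\mathcal N$ write $\dot F=[F,H]$ and $\ddot F=\dot{(\dot F)}$. Let $X_1,\dots,X_d\in\mathcal N$ and set $g_{ij}=[X_i,\dot X_j]$. Assume $[X_i,g_{jk}]=0$ for all $i,j,k$. Define $\nabla_i(F)=[F,\dot X_i]$ and $$\Gamma_{kij}=\tfrac12\big(\nabla_i g_{jk}+\nabla_j g_{ik}-\nabla_k g_{ij}\big).$$ Then for all $i,j,k$, $$\Gamma_{kij}=\tfrac12\,[X_i,[X_j,\ddot X_k]].$$
   Context: $[A,B]=AB-BA$ denotes the commutator. *)

From HB Require Import structures.
From mathcomp Require Import all_boot all_order all_algebra.
Set Implicit Arguments. Unset Strict Implicit. Unset Printing Implicit Defensive.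
Import GRing.Theory.
Local Open Scope ring_scope.

Definition commr (R : pzRingType) (x y : R) : R := x * y - y * x.

Section Defs.
Variables (K : fieldType) (A : algType K) (H : A).

Definition tdot (F : A) : A := commr F H.
Definition tddot (F : A) : A := tdot (tdot F).

Variables (d : nat) (X : 'I_d -> A).

Definition gmet (i j : 'I_d) : A := commr (X i) (tdot (X j)).
Definition nabla (i : 'I_d) (F : A) : A := commr F (tdot (X i)).
Definition Gamma (k i j : 'I_d) : A :=
  (2%:R : K)^-1 *: (nabla i (gmet j k) + nabla j (gmet i k) - nabla k (gmet i j)).
End Defs.

From HB Require Import structures.
From mathcomp Require Import all_boot all_order all_algebra.
Import GRing.Theory.
Local Open Scope ring_scope.

(* Write [a,b] = ab - ba and a' = [a,H].  The identity is pure commutator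
   algebra, valid in any (possibly non-commutative) ring:
   - ad_H = [_,H] is a derivation of the bracket:
       [[a,b],H] = [[a,H],b] + [a,[b,H]];
     together with antisymmetry this gives the Jacobi identity.
   - Differentiating the hypothesis [X_i, g_jk] = [X_i,[X_j,X_k']] = 0 along
     H expresses the second-derivative term [X_i,[X_j,X_k'']] through first
     derivatives only ([derived_constraint]).
   - One Jacobi rearrangement of that expression yields exactly
     nabla_i g_jk + nabla_j g_ik - nabla_k g_ij ([christoffel_identity]).
   The theorem follows by scaling both sides by 1/2. *)

Section CommutatorAlgebra.
Variable R : pzRingType.
Implicit Types a b c h x y z : R.

Lemma commrC a b : commr a b = - commr b a.
Proof. by rewrite /commr opprB. Qed.

Lemma commr0l a : commr 0 a = 0.
Proof. by rewrite /commr mulr0 mul0r subrr. Qed.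

Lemma commrNl a b : commr (- a) b = - commr a b.
Proof. by rewrite /commr mulNr mulrN opprB opprK addrC. Qed.

Lemma commrNr a b : commr a (- b) = - commr a b.
Proof. by rewrite commrC commrNl opprK -commrC. Qed.

Lemma commrDr a b c : commr a (b + c) = commr a b + commr a c.
Proof. by rewrite /commr mulrDl mulrDr opprD addrACA. Qed.

Lemma commrBl a b c : commr (a - b) c = commr a c - commr b c.
Proof. by rewrite /commr mulrBl mulrBr !opprB addrACA [RHS]addrACA [- (c * a) + _]addrC. Qed.

Lemma commrMl a b c : commr (a * b) c = a * commr b c + commr a c * b.
Proof. by rewrite /commr mulrBl mulrBr !mulrA addrA subrK. Qed.

Lemma commr_derivation a b h :
  commr (commr a b) h = commr (commr a h) b + commr a (commr b h).
Proof.
rewrite [commr a b]/commr commrBl !commrMl.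
by rewrite /commr (addrC (a * _)) opprD addrACA.
Qed.

Lemma commr_jacobi a b c :
  commr a (commr b c) = commr (commr a b) c + commr b (commr a c).
Proof.
by rewrite commrC commr_derivation (commrC b a) (commrC c a) commrNl commrNr
  opprD !opprK.
Qed.

(* Differentiating the constraint [x,[y,z]] = 0 along h expresses the term
   in which h hits z through the terms in which it hits x or y. *)
Lemma derived_constraint x y z h :
  commr x (commr y z) = 0 ->
  commr x (commr y (commr z h)) =
    - (commr (commr x h) (commr y z) + commr x (commr (commr y h) z)).
Proof.
move=> cxyz; have := congr1 (fun u : R => commr u h) cxyz.
rewrite /= commr0l commr_derivation (commr_derivation y z h) commrDr.
by rewrite addrA addrC => /eqP; rewrite addr_eq0 => /eqP.
Qed.

Lemma christoffel_identity x y z h :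
  commr x (commr y (commr z h)) = 0 ->
  commr (commr y (commr z h)) (commr x h)
    + commr (commr x (commr z h)) (commr y h)
    - commr (commr x (commr y h)) (commr z h)
  = commr x (commr y (commr (commr z h) h)).
Proof.
move=> cxyz; rewrite (derived_constraint _ _ _ _ cxyz) (commr_jacobi x (commr y h)).
rewrite (commrC (commr x h)) (commrC (commr y h) (commr x _)).
set u := commr (commr y _) _; set v := commr (commr x (commr z h)) _.
set w := commr (commr x _) _; clearbody u v w.
by rewrite opprD opprK opprB addrA.
Qed.

End CommutatorAlgebra.

Theorem lemma3p1 (K : fieldType) (A : algType K) (hK : 2%N \notin [pchar K])
  (H : A) (d : nat) (X : 'I_d -> A) :
  (forall i j k : 'I_d, commr (X i) (gmet H X j k) = 0) ->
  forall i j k : 'I_d,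
    Gamma H X k i j = (2%:R : K)^-1 *: commr (X i) (commr (X j) (tddot H (X k))).
Proof.
move=> hX i j k; rewrite /Gamma; congr (_ *: _).
exact: christoffel_identity (hX i j k).
Qed.
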